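(* For every finite bipartite separated graph $(E,C)$, the canonical partial action $\theta^{(E,C)}\colon\mathbb F(E^1)\curvearrowright\Omega(E,C)$ is relatively strongly topologically free.
   Context: Separated graph $(E,C)$: $E=(E^0,E^1,r,s)$, $C=\bigsqcup_vC_v$ with $C_v$ a partition of $r^{-1}(v)$ into non-empty sets. Finite bipartite: $E$ finite, $E^0=E^{0,0}\sqcup E^{0,1}$, $s(E^1)=E^{0,1}$, $r(E^1)=E^{0,0}$. $\mathbb F$ = free group on $E^1$; for $\xi\subseteq\mathbb F$, $\alpha\in\xi$, $\xi_\alpha=\{\sigma\in E^1\sqcup(E^1)^{-1}:\sigma\alpha\in\xi\}$. $\Omega(E,C)$ is the set of $\xi\subseteq\mathbb F$ with $1\in\xi$, right-convex (if a reduced word $e_m^{\varepsilon_m}\cdots e_1^{\varepsilon_1}\in\xi$ then $e_k^{\varepsilon_k}\cdots e_1^{\varepsilon_1}\in\xi$ for all $k<m$), and such that for every $\alpha\in\xi$ either $\xi_\alpha=s^{-1}(v)$ for some $v\in E^{0,1}$ or $\xi_\alpha=\{e_X^{-1}:X\in C_v\}$ for some $v\in E^{0,0}$ and $e_X\in X$; topology from $\{0,1\}^{\mathbb F}$. $\theta^{(E,C)}$ has domains $\Omega(E,C)_\alpha=\{\xi:\alpha^{-1}\in\xi\}$ and $\theta_\alpha(\xi)=\xi\alpha^{-1}$. For a partial action $\theta\colon G\curvearrowright\Omega$ with $\Omega_g$ the domain of $\theta_{g^{-1}}$: $\mathrm{Stab}(x)=\{g:x\in\Omega_{g^{-1}},\theta_g(x)=x\}$;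 $\theta$ is topologically free in $x$ if for every $1\ne g\in\mathrm{Stab}(x)$ and open $U\ni x$ there is $y\in U$ with $g\notin\mathrm{Stab}(y)$; strongly topologically free in $x$ if for all $1\ne g_1,\dots,g_n\in\mathrm{Stab}(x)$ and open $U\ni x$ there is $y\in U$ with $g_1,\dots,g_n\notin\mathrm{Stab}(y)$; $\Omega^{\mathrm{TF}}$ is the set of points of topological freeness; $\theta$ is relatively strongly topologically free if it is strongly topologically free in every point of $\Omega^{\mathrm{TF}}$. *)

From mathcomp Require Import all_boot.
Set Implicit Arguments. Unset Strict Implicit. Unset Printing Implicit Defensive.

(* Free group F(E^1) on a finite set of edges E1, as reduced words.   *)
(* A letter (e, false) stands for e, (e, true) for e^{-1}.             *)
(* A word [:: x_m; ...; x_1] (head = leftmost letter) stands for the   *)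
(* product x_m ... x_1.                                                *)
Section FreeGroup.
Variable E1 : finType.

Definition letter := (E1 * bool)%type.
Definition word := seq letter.

Definition linv (x : letter) : letter := (x.1, ~~ x.2).

Definition reduced (w : word) : bool := sorted (fun x y => y != linv x) w.

Fixpoint red (w : word) : word :=
  match w with
  | [::] => [::]
  | x :: w' =>
      match red w' with
      | [::] => [:: x]
      | y :: w'' => if y == linv x then w'' else x :: y :: w''
      end
  end.

Definition wmul (u v : word) : word := red (u ++ v).
Definition winv (w : word) : word := rev (map linv w).

End FreeGroup.

(* side v = true iff v \in E^{0,1}, C v = C_v (a set of subsets of     *)
(* r^{-1}(v)).                                                          *)
Section OmegaEC.
Variables (V E1 : finType) (r s : E1 -> V) (side : V -> bool)
          (C : V -> {set {set E1}}).

(* subsets of F are predicates on words (supported on reduced words);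
   points of {0,1}^F *)
Definition fsubset := word E1 -> Prop.

Definition xi_at (xi : fsubset) (alpha : word E1) : letter E1 -> Prop :=
  fun sigma => xi (wmul [:: sigma] alpha).

Definition Omega (xi : fsubset) : Prop :=
  (forall w, xi w -> reduced w) /\
  xi [::] /\
  (forall w, xi w -> forall n, xi (drop n w)) /\
  (forall alpha, xi alpha ->
     (exists v, side v /\
        forall sigma, xi_at xi alpha sigma <->
                      (sigma.2 = false /\ s sigma.1 = v))
     \/
     (exists v, ~~ side v /\
        exists eX : {set E1} -> E1,
          (forall X, X \in C v -> eX X \in X) /\
          forall sigma, xi_at xi alpha sigma <->
             exists2 X, X \in C v & sigma = (eX X, true))).

(* Product topology on {0,1}^F : U is open iff around each point it
   contains a basic cylinder fixed by finitely many coordinates. *)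
Definition is_open (U : fsubset -> Prop) : Prop :=
  forall xi, U xi ->
    exists S : seq (word E1),
      forall eta, (forall w, w \in S -> (eta w <-> xi w)) -> U eta.

(* The canonical partial action theta^{(E,C)}:
   Omega_alpha = { xi : alpha^{-1} \in xi } (domain of theta_{alpha^{-1}}),
   theta_alpha xi = xi alpha^{-1}. *)
Definition Omega_dom (alpha : word E1) (xi : fsubset) : Prop :=
  Omega xi /\ xi (winv alpha).

Definition theta (alpha : word E1) (xi : fsubset) : fsubset :=
  fun w => exists2 sigma, xi sigma & w = wmul sigma (winv alpha).

Definition inStab (x : fsubset) (g : word E1) : Prop :=
  reduced g /\ Omega_dom (winv g) x /\ (forall w, theta g x w <-> x w).

(* topologically free in x (U ranges over open subsets of Omega,
   i.e. traces on Omega of open subsets of {0,1}^F) *)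
Definition top_free_at (x : fsubset) : Prop :=
  forall g, g <> [::] -> inStab x g ->
  forall U, is_open U -> U x ->
  exists y, Omega y /\ U y /\ ~ inStab y g.

Definition strongly_top_free_at (x : fsubset) : Prop :=
  forall gs : seq (word E1),
  (forall g, g \in gs -> g <> [::] /\ inStab x g) ->
  forall U, is_open U -> U x ->
  exists y, Omega y /\ U y /\ (forall g, g \in gs -> ~ inStab y g).

Definition Omega_TF (x : fsubset) : Prop := Omega x /\ top_free_at x.

Definition rel_strongly_top_free : Prop :=
  forall x, Omega_TF x -> strongly_top_free_at x.

End OmegaEC.

From mathcomp Require Import all_boot.
From Stdlib Require Import Classical.
From mathcomp Require Import zify.
Set Implicit Arguments. Unset Strict Implicit. Unset Printing Implicit Defensive.

(* Let x be a point of topological freeness, g_1, ..., g_n nontrivial elements of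
   Stab(x), and U a neighbourhood of x; U contains every point agreeing with x on
   the words of length at most N. Topological freeness at g_1 gives z in Omega(E,C)
   agreeing with x up to length N + 1 but z <> x. At a shortest word on which they
   differ, x and z share a word beta whose local configurations differ; this only
   happens at a vertex v of E^{0,0}, where x and z pick different edges e <> f of a
   block X_0 of C_v. Replacing the branch of x through e^-1 beta by the branch of z
   through f^-1 beta gives a point y of Omega(E,C) that is still in U. If g fixes x
   and y, then g beta lies in x and its child f^-1 (g beta) lies in y but not in x,
   so it is the root f^-1 beta of the grafted branch: g beta = beta, hence g = 1. *)

Section FreeGroup.
Variable E1 : finType.
Implicit Types (a c : letter E1) (u v w : word E1).

Lemma linvK : involutive (@linv E1).
Proof. by case=> e b; rewrite /linv /= negbK. Qed.

Lemma reduced_behead a w : reduced (a :: w) -> reduced w.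
Proof. exact: path_sorted. Qed.

Lemma reduced_cons a c w : c != linv a -> reduced (c :: w) -> reduced [:: a, c & w].
Proof. by move=> Hca Hcw; rewrite /reduced /= Hca. Qed.

Lemma red_reduced w : reduced (red w).
Proof.
elim: w => [|a w IH] //=.
case E: (red w) => [|c w'] //; rewrite E in IH.
case: ifP => Hc; first exact: reduced_behead IH.
by rewrite /reduced /= Hc.
Qed.

Lemma red_id w : reduced w -> red w = w.
Proof.
elim: w => [|a w IH] //= Hr.
rewrite (IH (reduced_behead Hr)).
by case: w Hr {IH} => [|c w] // /andP [/negbTE -> _].
Qed.

Lemma red_idem w : red (red w) = red w.
Proof. exact: red_id (red_reduced w). Qed.

Lemma red_cons_red a w : red (a :: w) = red (a :: red w).
Proof. by rewrite /= red_idem. Qed.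

Lemma red_cons_reduced a w : reduced w ->
  red (a :: w) = if w is c :: w' then (if c == linv a then w' else a :: w) else [:: a].
Proof. by move=> Hw; rewrite /= (red_id Hw); case: w Hw. Qed.

Lemma red_cat_red u v : red (u ++ v) = red (u ++ red v).
Proof.
elim: u => [|a u IH] /=; first by rewrite red_idem.
by rewrite -/(red (u ++ v)) IH.
Qed.

Lemma red_cancel a w : red (linv a :: a :: w) = red w.
Proof.
rewrite red_cons_red [red (a :: w)]red_cons_red.
move: (red w) (red_reduced w) => w' Hw'.
rewrite (red_cons_reduced _ Hw').
case: w' Hw' => [|c w'] Hw'; first by rewrite /= linvK eqxx.
have Hw'' := reduced_behead Hw'.
case: ifP => Hc.
  move/eqP: Hc Hw' => -> Hw'; rewrite (red_cons_reduced _ Hw'').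
  case: w' Hw' Hw'' => [|c' w'] //.
  by rewrite /reduced /= linvK => /andP [/negbTE -> _].
have Hr : reduced [:: a, c & w'] by rewrite /reduced /= Hc.
by rewrite (red_cons_reduced _ Hr) linvK eqxx.
Qed.

Lemma red_red_cat u v : red (red u ++ v) = red (u ++ v).
Proof.
elim: u => [|a u IH] //.
rewrite cat_cons [RHS]red_cons_red -IH -red_cons_red red_cons_red.
move: (red u) (red_reduced u) => u' Hu'.
rewrite (red_cons_reduced _ Hu').
case: u' Hu' => [|c u'] Hu' //.
case: ifP => /eqP Hc //; subst c.
by have := red_cancel (linv a) (u' ++ v); rewrite linvK => ->.
Qed.

Lemma wmulA : associative (@wmul E1).
Proof. by move=> u v w; rewrite /wmul red_red_cat -red_cat_red catA. Qed.

Lemma wmulVw w : wmul (winv w) w = [::].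
Proof.
rewrite /wmul; elim: w => [|a w IH] //.
rewrite /winv /= rev_cons -cats1 -catA /=.
by rewrite red_cat_red red_cancel -red_cat_red.
Qed.

Lemma winvK : involutive (@winv E1).
Proof. by move=> w; rewrite /winv map_rev revK -map_comp (eq_map linvK) map_id. Qed.

Lemma wmulwV w : wmul w (winv w) = [::].
Proof. by rewrite -{1}(winvK w) wmulVw. Qed.

Lemma wmulw1 w : reduced w -> wmul w [::] = w.
Proof. by move=> Hw; rewrite /wmul cats0 red_id. Qed.

Lemma wmul_winv_inj g u v : reduced u -> reduced v ->
  wmul u (winv g) = wmul v (winv g) -> u = v.
Proof.
move=> Hu Hv /(congr1 (fun w => wmul w g)).
by rewrite -!wmulA wmulVw !wmulw1.
Qed.

Lemma wmul_winv_fixed g w : reduced g -> wmul w (winv g) = w -> g = [::].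
Proof.
move=> Hg /(congr1 (wmul (winv w))); rewrite wmulA wmulVw => Hinv.
by rewrite -(wmulw1 Hg) /wmul -Hinv -red_cat_red -/(wmul g (winv g)) wmulwV.
Qed.

Lemma wmul_letter_cons a w : reduced (a :: w) -> wmul [:: a] w = a :: w.
Proof. by move=> Hw; rewrite /wmul cat1s red_id. Qed.

Lemma wmul_linv_head a w : reduced (a :: w) -> wmul [:: linv a] (a :: w) = w.
Proof. by move=> Hw; rewrite /wmul cat1s (red_cons_reduced _ Hw) linvK eqxx. Qed.

Lemma wmul_letter_cases a w : reduced w ->
  wmul [:: a] w = a :: w \/ exists2 w', w = linv a :: w' & wmul [:: a] w = w'.
Proof.
move=> Hw; rewrite /wmul cat1s (red_cons_reduced _ Hw).
case: w Hw => [|c w] Hw; first by left.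
by case: eqP => [->|_]; [right; exists w | left].
Qed.

Lemma suffix_letter_enter p a w : reduced w -> ~~ suffix p w ->
  suffix p (wmul [:: a] w) -> p = a :: w.
Proof.
move=> Hw Hn; case: (wmul_letter_cases a Hw) => [-> | [w' Hww' ->] Hp].
  case/suffixP=> [[|d u]] /= Hu; first by rewrite Hu.
  by case: Hu => _ Hu; case/negP: Hn; apply/suffixP; exists u.
by case/negP: Hn; rewrite Hww' -cat1s; apply: suffix_catr.
Qed.

Lemma suffix_letter_leave p a w : reduced w -> suffix p w ->
  ~~ suffix p (wmul [:: a] w) -> w = p /\ wmul [:: a] w = behead p.
Proof.
move=> Hw Hp; case: (wmul_letter_cases a Hw) => [-> | [w' Hww' ->]] Hn.
  by case/negP: Hn; rewrite -cat1s; apply: suffix_catr.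
case/suffixP: Hp => [[|d u]] /= Hu; first by rewrite -Hu Hww'.
by case/negP: Hn; apply/suffixP; exists u; move: Hu; rewrite Hww' => -[].
Qed.

End FreeGroup.

Lemma ex_size_minimal (T : Type) (P : seq T -> Prop) :
  (exists w, P w) -> exists w, P w /\ forall w', size w' < size w -> ~ P w'.
Proof.
case=> w0 Pw0; apply: NNPP => no_min.
suff : forall n w, size w = n -> ~ P w by move/(_ _ w0 erefl).
elim/ltn_ind=> n IH w size_w Pw; apply: no_min; exists w; split=> // w' lt_w'.
by apply: (IH _ _ w' erefl); rewrite -size_w.
Qed.

Lemma size_le_sumn (T : eqType) (S : seq (seq T)) w :
  w \in S -> size w <= sumn (map size S).
Proof.
elim: S => [|u S IH] //=; rewrite inE => /orP [/eqP ->|/IH]; first exact: leq_addr.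
by move/leq_trans; apply; apply: leq_addl.
Qed.

Lemma ex_seq_size_le (T : finType) n :
  exists S : seq (seq T), forall w, size w <= n -> w \in S.
Proof.
elim: n => [|n [S HS]]; first by exists [:: [::]] => -[].
exists ([::] :: [seq a :: w | a <- enum T, w <- S]) => -[|a w] //= Hw.
by rewrite inE; apply/orP; right; apply: (allpairs_f (fun a w => a :: w)); rewrite ?mem_enum ?HS.
Qed.

Section Cylinders.
Variable E1 : finType.

Definition agree_upto N (x y : fsubset E1) := forall w : word E1, size w <= N -> (x w <-> y w).

Lemma agree_upto_refl N x : agree_upto N x x.
Proof. by []. Qed.

Lemma agree_upto_open N x : is_open (agree_upto N x).
Proof.
move=> y xy; have [S HS] := @ex_seq_size_le (E1 * bool)%type N.
by exists S => z yz w Hw; rewrite xy // yz // HS.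
Qed.

Lemma open_agree_upto U x : is_open U -> U x ->
  exists N, forall y, agree_upto N x y -> U y.
Proof.
move=> openU Ux; have [S HS] := openU x Ux.
exists (sumn (map size S)) => y xy; apply: HS => w /[dup] /size_le_sumn Hw _.
by split=> ?; apply/(xy w Hw).
Qed.

End Cylinders.

Section OmegaPoints.
Variables (V E1 : finType) (r s : E1 -> V) (side : V -> bool) (C : V -> {set {set E1}}).
Hypothesis partition_C : forall v, partition (C v) [set e | r e == v].

Definition admissible (A : letter E1 -> Prop) : Prop :=
     (exists v, side v /\
        forall sigma, A sigma <-> (sigma.2 = false /\ s sigma.1 = v))
     \/
     (exists v, ~~ side v /\
        exists eX : {set E1} -> E1,
          (forall X, X \in C v -> eX X \in X) /\
          forall sigma, A sigma <->
             exists2 X, X \in C v & sigma = (eX X, true)).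

Definition choice_star v (eX : {set E1} -> E1) (sigma : letter E1) : Prop :=
  exists2 X, X \in C v & sigma = (eX X, true).

Lemma admissible_ext (A B : letter E1 -> Prop) :
  (forall sg, A sg <-> B sg) -> admissible A -> admissible B.
Proof.
move=> AB [[v [Hv HA]]|[v [Hv [eX [HeX HA]]]]].
  by left; exists v; split=> // sg; rewrite -AB.
by right; exists v; split=> //; exists eX; split=> // sg; rewrite -AB.
Qed.

Lemma block_eq v X Y e : X \in C v -> Y \in C v -> e \in X -> e \in Y -> X = Y.
Proof.
case/and3P: (partition_C v) => _ triv _ HX HY eX eY.
by rewrite -(def_pblock triv HX eX) (def_pblock triv HY eY).
Qed.

Lemma block_range v X e : X \in C v -> e \in X -> r e = v.
Proof.
case/and3P: (partition_C v) => /eqP cover_C _ _ HX eX.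
have : e \in cover (C v) by apply/bigcupP; exists X.
by rewrite cover_C inE => /eqP.
Qed.

Lemma choice_star_block v eX X0 e : (forall X, X \in C v -> eX X \in X) ->
  choice_star v eX (e, true) -> X0 \in C v -> e \in X0 -> eX X0 = e.
Proof. by move=> HeX [X HX [->]] HX0 /(block_eq HX HX0 (HeX X HX)) ->. Qed.

Lemma admissible_pos A a : admissible A -> A a -> a.2 = false ->
  forall sg, A sg <-> sg.2 = false /\ s sg.1 = s a.1.
Proof.
case=> [[v [_ HA]]|[v [_ [eX [_ HA]]]]] /HA Aa a2 sg.
  by case: Aa => _ ->; apply: HA.
by case: Aa => X _ Ha; rewrite Ha in a2.
Qed.

Lemma admissible_neg A a : admissible A -> A a -> a.2 = true ->
  exists eX, [/\ ~~ side (r a.1), forall X, X \in C (r a.1) -> eX X \in X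
                & forall sg, A sg <-> choice_star (r a.1) eX sg].
Proof.
case=> [[v [_ HA]]|[v [Hv [eX [HeX HA]]]]] /HA Aa a2.
  by case: Aa; rewrite a2.
have [X HX Ha] := Aa.
have -> : r a.1 = v by rewrite Ha; apply: block_range HX (HeX X HX).
by exists eX; split.
Qed.

Section OmegaFacts.
Variable x : fsubset E1.
Hypothesis Ox : Omega s side C x.

Lemma Omega_reduced w : x w -> reduced w.
Proof. by case: Ox => H _; apply: H. Qed.

Lemma Omega_nil : x [::].
Proof. by case: Ox => _ []. Qed.

Lemma Omega_drop w n : x w -> x (drop n w).
Proof. by case: Ox => _ [_ [H _]] /H. Qed.

Lemma Omega_admissible w : x w -> admissible (xi_at x w).
Proof. by case: Ox => _ [_ [_ H]] /H. Qed.

Lemma Omega_suffix p w : x w -> suffix p w -> x p.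
Proof. by move=> xw /suffixP [u Hu]; have := Omega_drop (size u) xw; rewrite Hu drop_size_cat. Qed.

Lemma Omega_xi_at_linv t b : x (t :: b) -> xi_at x (t :: b) (linv t).
Proof.
move=> xtb; rewrite /xi_at wmul_linv_head ?(Omega_reduced xtb) //.
by have := Omega_drop 1 xtb; rewrite /= drop0.
Qed.

End OmegaFacts.

Lemma inStab_ext x y g : Omega s side C y -> (forall w, x w <-> y w) ->
  inStab s side C x g -> inStab s side C y g.
Proof.
move=> Oy xy [Hg [[_ xg] Hth]]; split=> //; split; first by split=> //; apply/xy.
move=> w; rewrite -xy -Hth.
by split=> -[sg Hsg ->]; exists sg => //; apply/xy.
Qed.

Lemma top_free_near x g N : top_free_at s side C x -> g <> [::] -> inStab s side C x g ->
  exists z, [/\ Omega s side C z, agree_upto N x z & exists w, ~ (x w <-> z w)].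
Proof.
move=> TFx g_ne g_stab.
have [z [Oz [xz z_nstab]]] := TFx g g_ne g_stab _ (@agree_upto_open _ N x) (@agree_upto_refl _ N x).
exists z; split=> //; apply: NNPP => no_diff; apply: z_nstab.
by apply: inStab_ext g_stab => // w; apply: NNPP => H; apply: no_diff; exists w.
Qed.

Lemma first_disagreement x z N : Omega s side C x -> Omega s side C z ->
  agree_upto N.+1 x z -> (exists w, ~ (x w <-> z w)) ->
  exists beta, [/\ N < size beta, x beta, z beta &
                   ~ (forall sg, xi_at x beta sg <-> xi_at z beta sg)].
Proof.
move=> Ox Oz xz /ex_size_minimal [w [xz_w min_w]].
have Nw : N.+1 < size w by rewrite ltnNge; apply/negP => /xz.
have x_or_z : x w \/ z w by apply: NNPP => H; apply: xz_w; split=> ?; case: H; [left|right].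
case: w xz_w min_w Nw x_or_z => [|sg beta] //= xz_w min_w Nw x_or_z.
have red_w : reduced (sg :: beta).
  by case: x_or_z => [/(Omega_reduced Ox) | /(Omega_reduced Oz)].
have xz_beta : x beta <-> z beta := NNPP _ (min_w beta (ltnSn _)).
have [xb zb] : x beta /\ z beta.
  case: x_or_z => [/(Omega_drop Ox 1) | /(Omega_drop Oz 1)]; rewrite /= drop0; tauto.
exists beta; split=> //.
by move/(_ sg); rewrite /xi_at wmul_letter_cons.
Qed.

Lemma branching_choice x z t b : Omega s side C x -> Omega s side C z ->
  x (t :: b) -> z (t :: b) ->
  ~ (forall sg, xi_at x (t :: b) sg <-> xi_at z (t :: b) sg) ->
  exists v eX X0 f,
    [/\ ~~ side v, forall X, X \in C v -> eX X \in X,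
        forall sg, xi_at x (t :: b) sg <-> choice_star v eX sg, X0 \in C v & f \in X0] /\
    [/\ f <> eX X0, x ((eX X0, true) :: t :: b), z ((f, true) :: t :: b)
      & ~ x ((f, true) :: t :: b)].
Proof.
move=> Ox Oz xtb ztb xz_neq.
have x_linv := Omega_xi_at_linv Ox xtb; have z_linv := Omega_xi_at_linv Oz ztb.
have [x_adm z_adm] := (Omega_admissible Ox xtb, Omega_admissible Oz ztb).
have [e0 t_e0] : exists e0, linv t = (e0, true).
  case E: (linv t) => [e0 []]; first by exists e0.
  case: xz_neq => sg; rewrite (admissible_pos x_adm x_linv) ?(admissible_pos z_adm z_linv) ?E //.
rewrite t_e0 in x_linv z_linv.
have [eX [side_v eX_mem x_star]] := admissible_neg x_adm x_linv erefl.
have [eY [_ eY_mem z_star]] := admissible_neg z_adm z_linv erefl.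
move: side_v eX_mem x_star eY_mem z_star; set v := r _ => side_v eX_mem x_star eY_mem z_star.
have [X0 X0_block eXY_neq] : exists2 X0, X0 \in C v & eX X0 <> eY X0.
  apply: NNPP => eXY_eq; apply: xz_neq => sg; rewrite x_star z_star.
  have eXY X : X \in C v -> eX X = eY X by move=> HX; apply: NNPP => ?; apply: eXY_eq; exists X.
  by split=> -[X HX ->]; exists X; rewrite ?eXY.
have e0_X0 : e0 \notin X0.
  apply/negP => e0_X0; apply: eXY_neq.
  rewrite (choice_star_block eX_mem _ X0_block e0_X0) ?(choice_star_block eY_mem _ X0_block e0_X0) //.
  - exact/z_star.
  - exact/x_star.
have reduced_X0 e : e \in X0 -> reduced [:: (e, true), t & b].
  move=> eX0; apply: reduced_cons (Omega_reduced Ox xtb).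
  rewrite -(linvK t) t_e0; apply/eqP => -[e0e]; by rewrite e0e eX0 in e0_X0.
exists v, eX, X0, (eY X0); split; first by split; last exact: eY_mem.
split=> [eYX|||].
- exact: eXY_neq (esym eYX).
- rewrite -(wmul_letter_cons (reduced_X0 _ (eX_mem _ X0_block))).
  by apply/x_star; exists X0.
- rewrite -(wmul_letter_cons (reduced_X0 _ (eY_mem _ X0_block))).
  by apply/z_star; exists X0.
- rewrite -(wmul_letter_cons (reduced_X0 _ (eY_mem _ X0_block))) => /x_star x_eY.
  exact: eXY_neq (choice_star_block eX_mem x_eY X0_block (eY_mem _ X0_block)).
Qed.

Section Graft.
Variables (x z : fsubset E1) (beta : word E1) (v : V) (eX : {set E1} -> E1)
          (X0 : {set E1}) (f : E1).
Hypotheses (Ox : Omega s side C x) (Oz : Omega s side C z) (x_beta : x beta) (z_beta : z beta).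
Hypotheses (side_v : ~~ side v) (eX_mem : forall X, X \in C v -> eX X \in X)
           (x_star : forall sg, xi_at x beta sg <-> choice_star v eX sg)
           (X0_block : X0 \in C v) (f_X0 : f \in X0) (f_neq : f <> eX X0).
Hypotheses (x_e : x ((eX X0, true) :: beta)) (z_f : z ((f, true) :: beta))
           (x_f : ~ x ((f, true) :: beta)).

Local Notation ebeta := ((eX X0, true) :: beta).
Local Notation fbeta := ((f, true) :: beta).

Definition graft : fsubset E1 :=
  fun w => (x w /\ ~~ suffix ebeta w) \/ (z w /\ suffix fbeta w).

Lemma x_not_suffix_fbeta w : x w -> ~~ suffix fbeta w.
Proof. by move=> xw; apply/negP => /(Omega_suffix Ox xw). Qed.

Lemma beta_not_suffix_ebeta : ~~ suffix ebeta beta.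
Proof. by apply/negP => /size_suffix; rewrite /= ltnn. Qed.

Lemma graft_right_convex w n : graft w -> graft (drop n w).
Proof.
case=> [[xw ebeta_w]|[zw fbeta_w]].
  left; split; first exact: Omega_drop.
  by apply: contra ebeta_w => /suffix_trans; apply; apply: suffix_drop.
have z_drop := Omega_drop Oz n zw.
case/suffixP: fbeta_w zw z_drop => u -> zw; rewrite drop_cat; case: ltnP => [n_u|u_n] z_drop.
  by right; split=> //; apply: suffix_suffix.
case: (n - size u) => [|k] /= in z_drop *; first by right; rewrite suffix_refl.
left; split; first exact: Omega_drop.
by apply/negP => /size_suffix; rewrite size_drop /=; lia.
Qed.

Lemma graft_xi_at_x w : x w -> ~~ suffix ebeta w -> w != beta ->
  forall sg, xi_at x w sg <-> xi_at graft w sg.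
Proof.
move=> xw ebeta_w w_beta sg; have red_w := Omega_reduced Ox xw.
split=> [xsw|[[] // | [_ /(suffix_letter_enter red_w (x_not_suffix_fbeta xw)) [_ w_eq]]]].
  left; split=> //; apply/negP => /(suffix_letter_enter red_w ebeta_w) [_ w_eq].
  by rewrite w_eq eqxx in w_beta.
by rewrite w_eq eqxx in w_beta.
Qed.

Lemma graft_xi_at_z w : z w -> suffix fbeta w -> forall sg, xi_at z w sg <-> xi_at graft w sg.
Proof.
move=> zw fbeta_w sg; rewrite /xi_at.
have [fbeta_sw | fbeta_sw] := boolP (suffix fbeta (wmul [:: sg] w)).
  split=> [zsw | [[xsw _] | [zsw _]] //]; first by right.
  by case/negP: (x_not_suffix_fbeta xsw).
have [_ ->] := suffix_letter_leave (Omega_reduced Oz zw) fbeta_w fbeta_sw.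
by split=> _ //; left; split=> //; exact: beta_not_suffix_ebeta.
Qed.

Lemma graft_xi_at_beta sg :
  xi_at graft beta sg <-> choice_star v (fun X => if X == X0 then f else eX X) sg.
Proof.
have red_beta := Omega_reduced Ox x_beta; rewrite /xi_at.
have [-> | sg_f] := eqVneq sg (f, true).
  rewrite wmul_letter_cons ?(Omega_reduced Oz z_f) //.
  by split=> _; [exists X0; rewrite ?eqxx | right; rewrite suffix_refl].
have [-> | sg_e] := eqVneq sg (eX X0, true).
  rewrite wmul_letter_cons ?(Omega_reduced Ox x_e) //; split.
    case=> [[_]|[_ /suffixP [[|d u]]]] /=; first by rewrite suffix_refl.
      by case=> f_eq; case: f_neq.
    by move/(congr1 size); rewrite /= size_cat /=; lia.
  case=> X HX; case: eqP => [_ [f_eq] | X_X0 [eX_eq]]; first by case: f_neq.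
  by case: X_X0; apply: (block_eq HX X0_block (eX_mem HX)); rewrite -eX_eq eX_mem.
have -> : graft (wmul [:: sg] beta) <-> x (wmul [:: sg] beta).
  split=> [[[] //|[_ /(suffix_letter_enter red_beta (x_not_suffix_fbeta x_beta)) [f_sg]]]|xsb].
    by rewrite f_sg eqxx in sg_f.
  left; split=> //; apply/negP => /(suffix_letter_enter red_beta beta_not_suffix_ebeta) [e_sg].
  by rewrite e_sg eqxx in sg_e.
rewrite -/(xi_at x beta sg) x_star.
split=> -[X HX sg_eq]; exists X => //; case: eqP sg_eq => [-> |] // sg_eq.
- by rewrite sg_eq eqxx in sg_e.
- by rewrite sg_eq eqxx in sg_f.
Qed.

Lemma Omega_graft : Omega s side C graft.
Proof.
split; [|split; [|split]].
- by move=> w [[/(Omega_reduced Ox) ? _]|[/(Omega_reduced Oz) ? _]].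
- by left; split; [exact: Omega_nil | apply/negP => /size_suffix].
- by move=> w /graft_right_convex.
- move=> w [[xw ebeta_w]|[zw fbeta_w]].
    have [-> | w_beta] := eqVneq w beta.
      right; exists v; split=> //; exists (fun X => if X == X0 then f else eX X).
      split=> [X HX | sg]; last exact: graft_xi_at_beta.
      by case: eqP => [-> | _] //; apply: eX_mem.
    exact: admissible_ext (graft_xi_at_x xw ebeta_w w_beta) (Omega_admissible Ox xw).
  exact: admissible_ext (graft_xi_at_z zw fbeta_w) (Omega_admissible Oz zw).
Qed.

Lemma graft_agree_upto : agree_upto (size beta) x graft.
Proof.
have long_fbeta w : suffix fbeta w -> size beta < size w by move/size_suffix.
have long_ebeta w : suffix ebeta w -> size beta < size w by move/size_suffix.
move=> w w_short; split=> [xw | [[] // | [_ /long_fbeta]]]; last by rewrite ltnNge w_short.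
by left; split=> //; apply: contraTN w_short => /long_ebeta; rewrite -ltnNge.
Qed.

Lemma graft_stab_trivial g : inStab s side C x g -> inStab s side C graft g -> g = [::].
Proof.
move=> [red_g [_ x_fix]] [_ [_ graft_fix]].
pose phi w := wmul w (winv g).
have x_phi_beta : x (phi beta) by apply/x_fix; exists beta.
have phi_fbeta : phi fbeta = wmul [:: (f, true)] (phi beta).
  by rewrite /phi wmulA wmul_letter_cons ?(Omega_reduced Oz z_f).
have graft_phi_fbeta : graft (phi fbeta) by apply/graft_fix; exists fbeta => //; right; rewrite suffix_refl.
have x_phi_fbeta : ~ x (phi fbeta).
  move/x_fix=> [w xw /wmul_winv_inj w_gf]; apply: x_f.
  by rewrite (w_gf (Omega_reduced Oz z_f) (Omega_reduced Ox xw)).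
have fbeta_phi : fbeta = (f, true) :: phi beta.
  case: graft_phi_fbeta x_phi_fbeta => [[//]|[_]]; rewrite phi_fbeta => fbeta_suff _.
  exact: suffix_letter_enter (Omega_reduced Ox x_phi_beta) (x_not_suffix_fbeta x_phi_beta) fbeta_suff.
by apply: wmul_winv_fixed red_g (_ : phi beta = beta); case: fbeta_phi.
Qed.

End Graft.

Lemma exists_graft_separating x z beta : Omega s side C x -> Omega s side C z ->
  x beta -> z beta -> 0 < size beta ->
  ~ (forall sg, xi_at x beta sg <-> xi_at z beta sg) ->
  exists y, [/\ Omega s side C y, agree_upto (size beta) x y &
             forall g, inStab s side C x g -> inStab s side C y g -> g = [::]].
Proof.
case: beta => [|t b] // Ox Oz xtb ztb _ xz_neq.
have [v [eX [X0 [f [[side_v eX_mem x_star X0_block f_X0] [f_neq x_e z_f x_f]]]]]] :=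
  branching_choice Ox Oz xtb ztb xz_neq.
exists (graft x z (t :: b) eX X0 f); split.
- exact: Omega_graft Ox Oz xtb ztb side_v eX_mem x_star X0_block f_X0 f_neq x_e z_f x_f.
- exact: graft_agree_upto.
- exact: graft_stab_trivial.
Qed.

End OmegaPoints.

Theorem proposition7 (V E1 : finType) (r s : E1 -> V) (side : V -> bool)
    (C : V -> {set {set E1}})
    (* bipartite: s(E^1) = E^{0,1}, r(E^1) = E^{0,0} *)
    (Hs : forall v, side v <-> exists e, s e = v)
    (Hr : forall v, ~~ side v <-> exists e, r e = v)
    (* C_v is a partition of r^{-1}(v) into non-empty sets *)
    (HC : forall v, partition (C v) [set e | r e == v]) :
  rel_strongly_top_free s side C.
Proof.
(* Bipartiteness is built into [Omega] through [side]; only [HC] is needed. *)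
move=> x [Ox TFx] gs stab_gs U openU Ux.
case: gs stab_gs => [|g gs] stab_gs; first by exists x.
have [g_ne g_stab] := stab_gs g (mem_head _ _).
have [N agree_U] := open_agree_upto openU Ux.
have [z [Oz xz [w xz_w]]] := top_free_near N.+1 TFx g_ne g_stab.
have [beta [N_beta x_beta z_beta xz_neq]] := first_disagreement Ox Oz xz (ex_intro _ w xz_w).
have [y [Oy xy sep]] :=
  exists_graft_separating HC Ox Oz x_beta z_beta (leq_ltn_trans (leq0n N) N_beta) xz_neq.
exists y; split=> //; split.
  by apply: agree_U => w' w'_N; apply: xy; apply: leq_trans w'_N (ltnW N_beta).
by move=> h /stab_gs [h_ne h_stab] /(sep h h_stab).
Qed.
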